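(* For all integers $x\ge0$ and $r\ge1$ there is a finite undirected graph $H$ with two specified vertices $s,t$ such that the smallest $s$-$t$ separator of $H$ has size $r$ and the union of all important $s$-$t$ separators of excess at most $x$ has size $2^{x+1}r-r$.
   Context: For disjoint $X,Y\subseteq V(H)$, a set $K\subseteq V(H)\setminus(X\cup Y)$ is an $X$-$Y$ separator if $H\setminus K$ has no path from $X$ to $Y$; an $s$-$t$ separator is a $\{s\}$-$\{t\}$ separator. $NR(H,A,B)$ is the set of vertices not reachable from $A$ in $H\setminus B$. For separators, $K_1\prec^*K_2$ means $NR(H,Y,K_1)\subset NR(H,Y,K_2)$ (proper inclusion). A minimal $X$-$Y$ separator $K$ is important if there is no $X$-$Y$ separator $K'$ with $K\prec^*K'$ and $|K|\ge|K'|$. The excess of an important separator $S$ is $|S|-r_0$, where $r_0$ is the size of a smallest important separator. *)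

(* Finite undirected simple graphs as symmetric irreflexive relations. *)
From mathcomp Require Import all_boot.
Set Implicit Arguments. Unset Strict Implicit. Unset Printing Implicit Defensive.

Section Sep.
Variables (V : finType) (e : rel V).

Definition del_rel (B : {set V}) : rel V :=
  fun u v => [&& e u v, u \notin B & v \notin B].

Definition has_path_avoiding (X Y K : {set V}) : bool :=
  [exists a in X, exists b in Y,
     [&& a \notin K, b \notin K & connect (del_rel K) a b]].

Definition is_sep (X Y K : {set V}) : bool :=
  [&& [disjoint K & X], [disjoint K & Y] & ~~ has_path_avoiding X Y K].

Definition NR (A B : {set V}) : {set V} :=
  [set v | ~~ [exists a in A, (a \notin B) && connect (del_rel B) a v]].

Definition sep_prec (Y K1 K2 : {set V}) : bool := NR Y K1 \proper NR Y K2.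

Definition minimal_sep (X Y K : {set V}) : bool :=
  is_sep X Y K && [forall K' : {set V}, (K' \proper K) ==> ~~ is_sep X Y K'].

Definition important_sep (X Y K : {set V}) : bool :=
  minimal_sep X Y K &&
  [forall K' : {set V}, ~~ [&& is_sep X Y K', sep_prec Y K K' & #|K'| <= #|K|]].

Definition important_excess_le (X Y : {set V}) (x : nat) (S : {set V}) : bool :=
  important_sep X Y S &&
  [exists S0 : {set V}, [&& important_sep X Y S0,
     [forall S' : {set V}, important_sep X Y S' ==> (#|S0| <= #|S'|)] &
     #|S| <= #|S0| + x]].

Definition union_important_excess_le (X Y : {set V}) (x : nat) : {set V} :=
  \bigcup_(S : {set V} | important_excess_le X Y x S) S.

End Sep.

(* H consists of r disjoint complete binary trees of depth x, with s joined
   to every root and every leaf joined to t.  Each tree carries an s-t path,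
   so every separator has at least r vertices, and the r roots form one.
   For a tree node v of depth d let S_v consist of v, of the children
   hanging off the path from the root of its tree to v, and of the roots of
   the other trees: a separator of size r + d.  It is important: if a
   separator K' cuts off from t strictly more than S_v does, it separates
   from t some vertex w lying beyond S_v, and the descending paths to t
   leaving from w and from the r + d vertices of S_v, each turning away
   from w whenever it passes above it, are pairwise disjoint and must all
   meet K'.  As d <= x, every tree node lies on an important separator of
   excess at most x, while all other vertices besides s and t are isolated
   and lie on no minimal separator; the union therefore consists of the
   r (2^(x+1) - 1) tree nodes. *)

From mathcomp Require Import all_boot zify.
Set Implicit Arguments. Unset Strict Implicit. Unset Printing Implicit Defensive.

Lemma card_le_hitting (W : finType) (I K : {set W}) (P : W -> {set W}) :
  (forall i j, i \in I -> j \in I -> i != j -> [disjoint P i & P j]) ->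
  (forall i, i \in I -> exists2 y, y \in K & y \in P i) -> #|I| <= #|K|.
Proof.
move=> disj hit; pose f y := [pick i in I | y \in P i].
have <- : #|[set Some i | i in I]| = #|I| by apply: card_imset => a b [].
apply: leq_trans (leq_imset_card f K).
apply: subset_leq_card; apply/subsetP => _ /imsetP [i iI ->].
have [y yK yP] := hit i iI.
apply/imsetP; exists y => //; rewrite /f; case: pickP => [j /andP [jI yj]|/(_ i)].
  case: (eqVneq j i) => [-> // | ne].
  by rewrite (disjointFr (disj _ _ jI iI ne) yj) in yP.
by rewrite iI yP.
Qed.

(** * Separators between two vertices *)

Section SingletonSeparators.
Variables (V : finType) (e : rel V).
Local Notation DR K := (del_rel e K).

Lemma has_path_avoiding1 (K : {set V}) a b :
  has_path_avoiding e [set a] [set b] K =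
  [&& a \notin K, b \notin K & connect (DR K) a b].
Proof.
apply/existsP/idP => [[a' /andP [/set1P -> /existsP [b' /andP [/set1P -> //]]]]|h].
by exists a; rewrite set11 /=; apply/existsP; exists b; rewrite set11.
Qed.

Lemma in_NR1 (K : {set V}) a u :
  a \notin K -> (u \in NR e [set a] K) = ~~ connect (DR K) a u.
Proof.
move=> aK; rewrite inE; congr negb.
apply/existsP/idP => [[a' /andP [/set1P -> /andP [_ //]]]|h].
by exists a; rewrite set11 aK.
Qed.

Lemma is_sep1E (K : {set V}) s t : is_sep e [set s] [set t] K =
  [&& s \notin K, t \notin K & ~~ connect (DR K) s t].
Proof.
rewrite /is_sep has_path_avoiding1 !(disjoint_sym K) !disjoints1.
by case: (s \in K); case: (t \in K).
Qed.

Lemma minimal_sep_edge (K : {set V}) s t u : symmetric e ->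
  minimal_sep e [set s] [set t] K -> u \in K -> exists z, e u z.
Proof.
move=> esym /andP [sepK minK] uK.
have /implyP := forallP minK (K :\ u); rewrite properD1 // => /(_ isT) nsep.
apply/existsP; apply: contraNT nsep; rewrite negb_exists => /forallP iso.
move: sepK; rewrite !is_sep1E !inE => /and3P [sK tK ncK].
rewrite (negbTE sK) (negbTE tK) !andbF /=.
suff eqR : DR (K :\ u) =2 DR K by rewrite (eq_connect eqR).
move=> a b; rewrite /del_rel !inE.
case: (eqVneq a u) => [-> | _]; first by rewrite (negbTE (iso _)).
by case: (eqVneq b u) => [-> | _] //; rewrite esym (negbTE (iso _)).
Qed.

Lemma del_rel_sym (K : {set V}) : symmetric e -> symmetric (DR K).
Proof. by move=> esym a b; rewrite /del_rel esym [X in _ && X]andbC. Qed.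

End SingletonSeparators.

(** * Heap numbering of binary trees *)

Lemma divn_expD b i j : b %/ 2 ^ (i + j) = b %/ 2 ^ i %/ 2 ^ j.
Proof. by rewrite expnD divnMA. Qed.

Lemma divn_expS b k : b %/ 2 ^ k.+1 = b %/ 2 ^ k %/ 2.
Proof. by rewrite expnSr divnMA. Qed.

(* Heap numbering of a complete binary tree: the root is 1 and the children
   of [a] are [2 a] and [2 a + 1], so [a] is an ancestor of [b] iff a > 0 and
   [a = b / 2^k] for some k. *)
Definition heap_anc a b := (0 < a) && [exists k : 'I_b.+1, b %/ 2 ^ k == a].

Lemma heap_ancP a b : reflect (0 < a /\ exists k, b %/ 2 ^ k = a) (heap_anc a b).
Proof.
apply: (iffP andP) => [[-> /existsP [k /eqP <-]]|[a0 [k hk]]].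
  by split=> //; exists k.
split=> //; apply/existsP.
have kb : k < b.+1.
  have : 2 ^ k <= b by rewrite -divn_gt0 ?expn_gt0 // hk.
  by have := ltn_expl k (isT : 1 < 2); lia.
by exists (Ordinal kb); rewrite hk.
Qed.

Section HeapAncestry.
Implicit Types a b c : nat.

Lemma heap_anc_gt0 a b : heap_anc a b -> 0 < a.
Proof. by case/andP. Qed.

Lemma heap_anc_refl a : 0 < a -> heap_anc a a.
Proof. by move=> a0; apply/heap_ancP; split=> //; exists 0; rewrite expn0 divn1. Qed.

Lemma heap_anc_le a b : heap_anc a b -> a <= b.
Proof. by case/heap_ancP=> _ [k <-]; apply: leq_div. Qed.

Lemma heap_anc_gt0r a b : heap_anc a b -> 0 < b.
Proof. by move=> h; have := heap_anc_le h; have := heap_anc_gt0 h; lia. Qed.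

Lemma heap_anc_trans a b c : heap_anc a b -> heap_anc b c -> heap_anc a c.
Proof.
case/heap_ancP=> a0 [i hi] /heap_ancP [_ [j hj]]; apply/heap_ancP; split=> //.
by exists (j + i); rewrite divn_expD hj.
Qed.

Lemma heap_anc_anti a b : heap_anc a b -> heap_anc b a -> a = b.
Proof. by move=> /heap_anc_le h1 /heap_anc_le h2; apply/eqP; rewrite eqn_leq h1 h2. Qed.

Lemma heap_anc_total a1 a2 b :
  heap_anc a1 b -> heap_anc a2 b -> heap_anc a1 a2 \/ heap_anc a2 a1.
Proof.
case/heap_ancP=> p1 [i hi] /heap_ancP [p2 [j hj]].
case: (leqP i j) => hij.
  right; apply/heap_ancP; split=> //; exists (j - i).
  by rewrite -hi -divn_expD subnKC.
left; apply/heap_ancP; split=> //; exists (i - j).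
by rewrite -hj -divn_expD subnKC // ltnW.
Qed.

Lemma heap_anc_half a b : heap_anc a b -> a != b -> heap_anc a (b %/ 2).
Proof.
case/heap_ancP=> a0 [[|k] hk] ne.
  by move: hk ne; rewrite expn0 divn1 => ->; rewrite eqxx.
by apply/heap_ancP; split=> //; exists k; rewrite -(expn1 2) -divn_expD.
Qed.

Lemma heap_anc_parent b : 0 < b %/ 2 -> heap_anc (b %/ 2) b.
Proof. by move=> h; apply/heap_ancP; split=> //; exists 1; rewrite expn1. Qed.

Lemma heap_anc_root b : 0 < b -> heap_anc 1 b.
Proof.
move=> b0; apply/heap_ancP; split=> //; exists (trunc_log 2 b).
have lo := trunc_logP (isT : 1 < 2) b0; have hi := trunc_log_ltn b (isT : 1 < 2).
apply/eqP; rewrite eqn_leq divn_gt0 ?expn_gt0 // lo andbT -ltnS ltn_divLR ?expn_gt0 //.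
by rewrite -expnS.
Qed.

Lemma heap_anc_strict_le a b : heap_anc a b -> a != b -> a <= b %/ 2.
Proof. by move=> h ne; apply: heap_anc_le; apply: heap_anc_half. Qed.

Lemma heap_anc_children_excl a b : 0 < a ->
  heap_anc (2 * a) b -> heap_anc (2 * a).+1 b -> False.
Proof.
move=> a0 h1 h2; case: (heap_anc_total h1 h2) => h.
  have := heap_anc_strict_le h; lia.
have := heap_anc_le h; lia.
Qed.

Lemma heap_anc_bound x a b : heap_anc a b -> a != b -> b < 2 ^ x.+1 -> a < 2 ^ x.
Proof. by move=> h ne; have := heap_anc_strict_le h ne; rewrite expnS; lia. Qed.

Lemma heap_depth_lt x b k : b < 2 ^ x.+1 -> 1 < b %/ 2 ^ k -> k < x.
Proof.
move=> hb; rewrite leq_divRL ?expn_gt0 // => hk.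
by rewrite -(ltn_exp2l _ _ (isT : 1 < 2)); rewrite expnS in hb *; lia.
Qed.

Definition heap_sibling g := if odd g then g.-1 else g.+1.

Lemma heap_siblingP h g : h %/ 2 = g %/ 2 -> h != g -> h = heap_sibling g.
Proof.
rewrite /heap_sibling => H1 H2; case: ifP => Ho; move/eqP: H2.
all: rewrite -?modn2 in Ho *; lia.
Qed.

(* [g] hangs off the path from the root to [b]: its parent lies strictly
   above [b] on that path, but [g] itself is not on it. *)
Definition heap_hangs_off b g :=
  [&& heap_anc (g %/ 2) b, g %/ 2 != b & ~~ heap_anc g b].

Lemma heap_anc_branch b y : 0 < b -> 0 < y -> ~~ heap_anc b y -> ~~ heap_anc y b ->
  exists2 g, heap_anc g y & heap_hangs_off b g.
Proof.
move=> b0 y0 nby nyb.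
have ex : exists j, heap_anc (y %/ 2 ^ j) b.
  have /heap_ancP [_ [j hj]] := heap_anc_root y0.
  by exists j; rewrite hj heap_anc_root.
case: (ex_minnP ex) => [[|k] hk kmin].
  by move: hk; rewrite expn0 divn1 (negbTE nyb).
rewrite divn_expS in hk; have g0 : 0 < y %/ 2 ^ k by have := heap_anc_gt0 hk; lia.
exists (y %/ 2 ^ k); first by apply/heap_ancP; split=> //; exists k.
apply/and3P; split=> //.
  apply: contraNneq nby => e; apply/heap_ancP.
  by split; [rewrite -e; exact: heap_anc_gt0 hk | exists k.+1; rewrite divn_expS].
by apply/negP => /kmin; rewrite ltnn.
Qed.

Lemma heap_hangs_offE b g : heap_hangs_off b g ->
  exists2 k, 1 < b %/ 2 ^ k & g = heap_sibling (b %/ 2 ^ k).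
Proof.
case/and3P=> /heap_ancP [g0 [[|k] hk]] ne nagb.
  by move: ne; rewrite -hk expn0 divn1 eqxx.
rewrite divn_expS in hk; exists k; first lia.
apply: heap_siblingP => //; apply: contra nagb => /eqP ->.
by apply/heap_ancP; split; [lia | exists k].
Qed.

Definition heap_sep b g := (g == b) || heap_hangs_off b g.

Lemma heap_sep_antichain b g1 g2 :
  heap_sep b g1 -> heap_sep b g2 -> heap_anc g1 g2 -> g1 = g2.
Proof.
case/orP=> [/eqP -> | /and3P [p1 ne1 na1]] /orP [/eqP -> // | /and3P [p2 ne2 na2]] a12.
- case: (eqVneq b g2) => [// | ne]; case/negP: ne2; apply/eqP.
  exact: heap_anc_anti p2 (heap_anc_half a12 ne).
- by rewrite a12 in na1.
- case: (eqVneq g1 g2) => [// | ne]; case/negP: na1.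
  exact: heap_anc_trans (heap_anc_half a12 ne) p2.
Qed.

Lemma heap_sep_cover b y : 0 < b -> 0 < y ->
  (exists2 g, heap_sep b g & heap_anc g y) \/ (heap_anc y b /\ y != b).
Proof.
move=> b0 y0; case: (boolP (heap_anc b y)) => [aby | nby].
  by left; exists b; rewrite // /heap_sep eqxx.
case: (boolP (heap_anc y b)) => [ayb | nyb].
  by right; split=> //; apply: contraNneq nby => ->; apply: heap_anc_refl.
have [g agy hg] := heap_anc_branch b0 y0 nby nyb.
by left; exists g; rewrite // /heap_sep hg orbT.
Qed.

End HeapAncestry.

(** * The graph H *)

Section Tree.
Variables x r' : nat.
Local Notation r := r'.+1.
Local Notation M := (2 ^ x.+1).

(* [None] is s, [Some None] is t and [Some (Some (c, h))] is the vertex of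
   heap index h in the c-th tree; heap index 0 only pads the type and gives
   isolated vertices. *)
Definition vtx := option (option ('I_r * 'I_M)%type).

Lemma M_gt0 : 0 < M. Proof. by rewrite expn_gt0. Qed.
Lemma M_gt1 : 1 < M. Proof. by rewrite -{1}(expn0 2) ltn_exp2l. Qed.

Definition idx0 : 'I_M := Ordinal M_gt0.
Definition ord_idx (h : nat) : 'I_M := insubd idx0 h.
Definition node (c : 'I_r) (h : nat) : vtx := Some (Some (c, ord_idx h)).
Definition src : vtx := None.
Definition snk : vtx := Some None.
Definition copy (a : vtx) : 'I_r := if a is Some (Some p) then p.1 else ord0.
Definition hidx (a : vtx) : nat := if a is Some (Some p) then val p.2 else 0.
Definition is_node (a : vtx) := 0 < hidx a.

Lemma hidx_lt a : hidx a < M.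
Proof. by case: a => [[[c h]|]|] //=; rewrite M_gt0. Qed.

Lemma hidx_node c h : h < M -> hidx (node c h) = h.
Proof. by move=> hM; rewrite /= /ord_idx insubdK. Qed.

Lemma copy_node c h : copy (node c h) = c.
Proof. by []. Qed.

Lemma node_eta a : is_node a -> a = node (copy a) (hidx a).
Proof. by case: a => [[[c h]|]|] //= _; rewrite /node /ord_idx valKd. Qed.

Lemma node_eq a b : is_node a -> is_node b -> copy a = copy b -> hidx a = hidx b -> a = b.
Proof. by move=> na nb ec eh; rewrite (node_eta na) (node_eta nb) ec eh. Qed.

Lemma node_is_node c h : 0 < h -> h < M -> is_node (node c h).
Proof. by move=> h0 hM; rewrite /is_node hidx_node. Qed.

Definition down_arc (a b : vtx) : bool :=
  match a, b with
  | None, Some (Some p) => val p.2 == 1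
  | Some (Some p), Some (Some q) =>
      (p.1 == q.1) && (0 < val p.2) && (val q.2 %/ 2 == val p.2)
  | Some (Some p), Some None => 2 ^ x <= val p.2
  | _, _ => false
  end.

Definition edge a b := down_arc a b || down_arc b a.

Lemma edge_sym : symmetric edge.
Proof. by move=> a b; rewrite /edge orbC. Qed.

Lemma edge_irr : irreflexive edge.
Proof.
move=> a; rewrite /edge orbb; case: a => [[[c h]|]|] //=.
by rewrite eqxx /=; apply/negP => /andP [h1 /eqP h2]; move: h1 h2; lia.
Qed.

Lemma down_arcP a b : down_arc a b -> [\/ [/\ a = src, is_node b & hidx b = 1],
   [/\ is_node a, is_node b, copy a = copy b & hidx b %/ 2 = hidx a] |
   [/\ b = snk, is_node a & 2 ^ x <= hidx a]].
Proof.
case: a => [[[c h]|]|]; case: b => [[[c' h']|]|] //=.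
- case/andP => /andP [/eqP -> p0] /eqP e.
  by apply: Or32; split=> //; rewrite /is_node /=; lia.
- move=> hx; apply: Or33; split=> //; rewrite /is_node /=.
  have := expn_gt0 2 x; lia.
- by move/eqP=> e; apply: Or31; split=> //; rewrite /is_node /= e.
Qed.

Lemma edge_root c : edge src (node c 1).
Proof. by rewrite /edge /= /ord_idx insubdK //; exact: M_gt1. Qed.

Lemma edge_child a b : is_node a -> is_node b -> copy a = copy b ->
  hidx b %/ 2 = hidx a -> edge a b.
Proof.
case: a => [[[c h]|]|] //; case: b => [[[c' h']|]|] //= na nb ec eh.
by apply/orP; left; rewrite /= ec eh !eqxx andbT; exact: na.
Qed.

Lemma edge_leaf a : is_node a -> 2 ^ x <= hidx a -> edge a snk.
Proof. by case: a => [[[c h]|]|] //= na hx; apply/orP; left. Qed.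


Definition anc (a b : vtx) := (copy a == copy b) && heap_anc (hidx a) (hidx b).

Lemma anc_nodeL a b : anc a b -> is_node a.
Proof. by case/andP=> _ /heap_anc_gt0. Qed.
Lemma anc_nodeR a b : anc a b -> is_node b.
Proof. by case/andP=> _ /heap_anc_gt0r. Qed.
Lemma anc_refl a : is_node a -> anc a a.
Proof. by move=> na; rewrite /anc eqxx heap_anc_refl. Qed.
Lemma anc_trans a b c : anc a b -> anc b c -> anc a c.
Proof.
case/andP=> /eqP e1 h1 /andP [/eqP e2 h2]; rewrite /anc e1 e2 eqxx.
exact: heap_anc_trans h1 h2.
Qed.
Lemma anc_anti a b : anc a b -> anc b a -> a = b.
Proof.
move=> h1 h2; apply: node_eq (anc_nodeL h1) (anc_nodeR h1) _ _.
  by case/andP: h1 => /eqP.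
by case/andP: h1 => _ h1; case/andP: h2 => _ h2; apply: heap_anc_anti.
Qed.
Lemma anc_total a1 a2 b : anc a1 b -> anc a2 b -> anc a1 a2 \/ anc a2 a1.
Proof.
case/andP=> /eqP e1 h1 /andP [/eqP e2 h2]; rewrite /anc e1 e2 eqxx /=.
exact: heap_anc_total h1 h2.
Qed.
(* [y] lies on the leftmost descending path a, 2a, 4a, ... from [a]. *)
Definition leftpath (a y : vtx) := [&& copy y == copy a, is_node a &
   [exists j : 'I_(hidx y).+1, hidx y == hidx a * 2 ^ j]].

Lemma leftpath_anc a y : leftpath a y -> anc a y.
Proof.
case/and3P=> /eqP ec na /existsP [[j jb] /= /eqP hj]; rewrite /anc ec eqxx /=.
by apply/heap_ancP; split=> //; exists j; rewrite hj mulnK // expn_gt0.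
Qed.

Lemma leftpath_refl a : is_node a -> leftpath a a.
Proof.
move=> na; rewrite /leftpath eqxx na /=; apply/existsP; exists ord0.
by rewrite expn0 muln1.
Qed.

Lemma leftpath_child a y : is_node a -> hidx a < 2 ^ x ->
  leftpath (node (copy a) (2 * hidx a)) y -> leftpath a y.
Proof.
move=> na hx; have hM : 2 * hidx a < M by rewrite expnS; lia.
rewrite {1}/leftpath hidx_node // copy_node.
case/and3P=> /eqP ec _ /existsP [[j jb] /= /eqP hj].
rewrite /leftpath ec eqxx na /=; apply/existsP.
have hj' : hidx y = hidx a * 2 ^ j.+1 by rewrite hj expnS; lia.
have lj : j.+1 < (hidx y).+1.
  have := ltn_expl j.+1 (isT : 1 < 2).
  by have : 0 < hidx a := na; rewrite hj'; nia.
by exists (Ordinal lj); rewrite /= hj'.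
Qed.

(* [u] belongs to the separator S_v. *)
Definition in_sep (v u : vtx) := is_node u &&
  if copy u == copy v then heap_sep (hidx v) (hidx u) else hidx u == 1.

Lemma in_sep_node v u : in_sep v u -> is_node u.
Proof. by case/andP. Qed.

Lemma in_sep_refl v : is_node v -> in_sep v v.
Proof. by move=> nv; rewrite /in_sep nv eqxx /heap_sep eqxx. Qed.

Lemma in_sep_antichain v a b : in_sep v a -> in_sep v b -> anc a b -> a = b.
Proof.
move=> /andP [na Ka] /andP [nb Kb] /andP [/eqP eab hab].
apply: node_eq => //; move: Ka Kb; rewrite eab.
case: ifP => _ Ka Kb; first exact: heap_sep_antichain Ka Kb hab.
by rewrite (eqP Ka) (eqP Kb).
Qed.

Lemma in_sep_cover v y : is_node v -> is_node y ->
  (exists2 a, in_sep v a & anc a y) \/ (anc y v /\ hidx y != hidx v).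
Proof.
move=> nv ny; case: (eqVneq (copy y) (copy v)) => cyv; last first.
  left; exists (node (copy y) 1).
    by rewrite /in_sep copy_node hidx_node ?M_gt1 // (negbTE cyv) node_is_node ?M_gt1.
  by rewrite /anc copy_node eqxx hidx_node ?M_gt1 //= heap_anc_root.
case: (heap_sep_cover nv ny) => [[g hg agy] | [ayv ne]]; last first.
  by right; split; rewrite // /anc cyv eqxx.
have g0 : 0 < g := heap_anc_gt0 agy.
have gM : g < M by have := heap_anc_le agy; have := hidx_lt y; lia.
left; exists (node (copy y) g).
  by rewrite /in_sep copy_node hidx_node // cyv eqxx node_is_node.
by rewrite /anc copy_node eqxx hidx_node.
Qed.

(* t and the vertices strictly below S_v: the side of S_v containing t. *)
Definition below_sep v y :=
  (y == snk) || [exists a, [&& in_sep v a, anc a y & a != y]].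

Definition off_child (w i : vtx) : vtx :=
  if heap_anc (2 * hidx i) (hidx w) then node (copy i) (2 * hidx i).+1
  else node (copy i) (2 * hidx i).

Lemma off_childP w i : anc i w -> i != w ->
  [/\ is_node (off_child w i), copy (off_child w i) = copy i,
      hidx (off_child w i) %/ 2 = hidx i & ~~ anc (off_child w i) w].
Proof.
case/andP=> /eqP ciw aiw ne.
have hne : hidx i != hidx w.
  apply: contra ne => /eqP h; apply/eqP.
  by apply: node_eq => //; [exact: heap_anc_gt0 aiw | exact: heap_anc_gt0r aiw].
have hx := heap_anc_bound aiw hne (hidx_lt w).
have i0 := heap_anc_gt0 aiw.
have h1 : (2 * hidx i).+1 < 2 ^ x.+1 by rewrite expnS; lia.
have h2 : 2 * hidx i < 2 ^ x.+1 by rewrite expnS; lia.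
rewrite /off_child; case: ifP => hc; rewrite copy_node hidx_node //; split=> //.
- by apply: node_is_node.
- lia.
- rewrite /anc copy_node hidx_node // ciw eqxx /=; apply/negP => h.
  exact: heap_anc_children_excl i0 hc h.
- by apply: node_is_node => //; lia.
- lia.
- by rewrite /anc copy_node hidx_node // ciw eqxx /= hc.
Qed.

Lemma anc_off_child w i : anc i w -> i != w -> anc i (off_child w i).
Proof.
move=> aiw ne; have [nc cc hc _] := off_childP aiw ne.
rewrite /anc cc eqxx /= -hc heap_anc_parent // hc; exact: heap_anc_gt0 (andP aiw).2.
Qed.

(* [y] lies on the escape path from [i]: it descends from [i] to t along
   leftmost paths, after first stepping off the path to [w] when [i] is a
   proper ancestor of [w]. *)
Definition escape (w i y : vtx) : bool :=
  if i == w then leftpath w y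
  else if anc i w then (y == i) || leftpath (off_child w i) y else leftpath i y.

Lemma escape_anc w i y : is_node i -> escape w i y -> anc i y.
Proof.
move=> ni; rewrite /escape; case: eqP => [->|ne]; first exact: leftpath_anc.
case: ifP => aiw; last exact: leftpath_anc.
case/orP=> [/eqP ->|h]; first exact: anc_refl.
have ne' : i != w by apply/eqP.
exact: anc_trans (anc_off_child aiw ne') (leftpath_anc h).
Qed.

Section EscapeDisjoint.
Variables (v w u0 : vtx).
Hypotheses (K0 : in_sep v u0) (a0 : anc u0 w).

Lemma escape_leftpath_disjoint j y :
  in_sep v j -> j != w -> leftpath w y -> escape w j y -> False.
Proof.
move=> Kj jw Lw; rewrite /escape (negbTE jw).
have awy := leftpath_anc Lw; have nj := in_sep_node Kj.
case: ifP => ajw.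
  case/orP=> [/eqP e|Lc].
    by move: jw; rewrite (anc_anti ajw) ?eqxx // -e.
  have [nc cc hc nacw] := off_childP ajw jw.
  case: (anc_total (leftpath_anc Lc) awy) => h; first by rewrite h in nacw.
  have ne : hidx w != hidx (off_child w j).
    apply: contra nacw => /eqP e; rewrite (_ : off_child w j = w) ?anc_refl //.
      exact: anc_nodeR ajw.
    apply: node_eq => //; first exact: anc_nodeR ajw.
    by case/andP: h => /eqP.
  case/andP: h => /eqP cwc hwc.
  have := heap_anc_half hwc ne; rewrite hc => hwj.
  case/andP: (ajw) => /eqP cjw hjw.
  move/negP: jw; apply; apply/eqP; apply: node_eq => //; first exact: anc_nodeR ajw.
  exact: heap_anc_anti hjw hwj.
move=> Lj; case: (anc_total (leftpath_anc Lj) awy) => h; first by rewrite h in ajw.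
by move: ajw; rewrite -(in_sep_antichain K0 Kj (anc_trans a0 h)) a0.
Qed.

Lemma escape_disjoint i j y : (i == w) || in_sep v i -> (j == w) || in_sep v j ->
  i != j -> escape w i y -> escape w j y -> False.
Proof.
move=> Ii Ij ij Pi Pj.
case: (eqVneq i w) Ii => [iw _|iw /= Ki].
  subst i; case: (eqVneq j w) Ij => [jw|jw /= Kj]; first by rewrite jw eqxx in ij.
  by move: Pi; rewrite /escape eqxx => Lw; exact: escape_leftpath_disjoint Kj jw Lw Pj.
case: (eqVneq j w) Ij => [jw _|jw /= Kj].
  subst j; move: Pj; rewrite /escape eqxx => Lw.
  exact: escape_leftpath_disjoint Ki iw Lw Pi.
have ai := escape_anc (in_sep_node Ki) Pi; have aj := escape_anc (in_sep_node Kj) Pj.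
case: (anc_total ai aj) => h.
  by move: ij; rewrite (in_sep_antichain Ki Kj h) eqxx.
by move: ij; rewrite (in_sep_antichain Kj Ki h) eqxx.
Qed.

End EscapeDisjoint.

Lemma below_sep_closed v a b : is_node v -> edge a b -> ~~ in_sep v b ->
  below_sep v a -> below_sep v b.
Proof.
move=> nv eab nKb; rewrite /below_sep.
case/orP=> [/eqP ea|/existsP [k /and3P [Kk ka kna]]].
  subst a; case/orP: eab => /down_arcP [[]|[]|[]] //.
  all: try by rewrite /is_node.
  move=> _ nb hb; case: (in_sep_cover nv nb) => [[k Kk kb]|[bv ne]].
    apply/orP; right; apply/existsP; exists k; rewrite Kk kb /=.
    by apply: contraNneq nKb => <-.
  exfalso; have := heap_anc_bound (andP bv).2 ne (hidx_lt v); lia.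
have nk := anc_nodeL ka; have na := anc_nodeR ka.
case: (eqVneq b snk) => [->|bt] /=; first by []. apply/existsP; exists k; rewrite Kk /=.
have knb : k != b by apply: contraNneq nKb => <-.
rewrite knb andbT.
case/orP: eab => /down_arcP [[ea nb hb]|[_ nb cab hab]|[eb _ _]].
- by rewrite ea in na.
- apply: anc_trans ka _; rewrite /anc cab eqxx /= -hab; apply: heap_anc_parent.
  by rewrite hab.
- by rewrite eb eqxx in bt.
- case/andP: (ka) => _ hka.
  have hk1 := heap_anc_le hka; have hk0 := heap_anc_gt0 hka.
  exfalso; move/negP: kna; apply; apply/eqP; apply: node_eq => //.
    by case/andP: (ka) => /eqP.
  by lia.
- have hne : hidx k != hidx a.
    apply: contra kna => /eqP h; apply/eqP.
    by apply: node_eq => //; case/andP: ka => /eqP.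
  case/andP: ka => /eqP cka hka.
  rewrite /anc cka -cab eqxx /= -hab; exact: heap_anc_half.
- by rewrite eb in na.
Qed.

Section Graph.
Variables (V : finType) (dec : V -> vtx) (enc : vtx -> V).
Hypotheses (decK : cancel dec enc) (encK : cancel enc dec).

Definition eH : rel V := fun u w => edge (dec u) (dec w).
Definition sH := enc src.
Definition tH := enc snk.
Local Notation DR K := (del_rel eH K).

Lemma eH_sym : symmetric eH.
Proof. by move=> a b; rewrite /eH edge_sym. Qed.

Lemma eH_irr : irreflexive eH.
Proof. by move=> u; rewrite /eH edge_irr. Qed.

Lemma sH_neq_tH : sH != tH.
Proof. by rewrite /sH /tH (can_eq encK). Qed.

Lemma connect_DR_sym (K : {set V}) : connect_sym (DR K).
Proof. exact: sym_connect_sym (del_rel_sym K eH_sym). Qed.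

Lemma connect_edge (K : {set V}) a b : edge a b -> enc a \notin K -> enc b \notin K ->
  connect (DR K) (enc a) (enc b).
Proof. by move=> eab na nb; apply: connect1; rewrite /del_rel /eH !encK eab na nb. Qed.

Lemma connect_leftpath_snk (K : {set V}) a : tH \notin K -> is_node a ->
  (forall y, leftpath a y -> enc y \notin K) -> connect (DR K) (enc a) tH.
Proof.
move=> tK; move: {-1}(2 ^ x.+1 - hidx a) (leqnn (2 ^ x.+1 - hidx a)) => n.
elim: n a => [|n IH] a hn na hK.
  by have := hidx_lt a; lia.
have aK := hK a (leftpath_refl na).
have a0 : 0 < hidx a := na.
case: (leqP (2 ^ x) (hidx a)) => hx.
  by apply: connect_edge => //; exact: edge_leaf.
set b := node (copy a) (2 * hidx a).
have hbM : 2 * hidx a < 2 ^ x.+1 by rewrite expnS; lia.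
have hb : hidx b = 2 * hidx a by rewrite hidx_node.
have nb : is_node b by rewrite /is_node hb; have : 0 < hidx a := na; lia.
apply: connect_trans (_ : connect _ _ (enc b)) _.
  apply: connect_edge => //.
    by apply: edge_child => //; rewrite hb; lia.
  by apply: hK; apply: leftpath_child => //; apply: leftpath_refl.
apply: IH => //; first by rewrite hb; lia.
by move=> y hy; apply: hK; apply: leftpath_child.
Qed.

Lemma connect_src_anc (K : {set V}) a : sH \notin K -> is_node a ->
  (forall b, anc b a -> enc b \notin K) -> connect (DR K) sH (enc a).
Proof.
move=> sK; move: {-1}(hidx a) (leqnn (hidx a)) => n.
elim: n a => [|n IH] a hn na hK; first by move: na; rewrite /is_node; lia.
have aK := hK a (anc_refl na).
case: (eqVneq (hidx a) 1) => h1.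
  rewrite (node_eta na) h1; apply: connect_edge => //; first exact: edge_root.
  by rewrite -h1 -node_eta.
set p := node (copy a) (hidx a %/ 2).
have hpM : hidx a %/ 2 < 2 ^ x.+1 by have := hidx_lt a; have := leq_div (hidx a) 2; lia.
have hp : hidx p = hidx a %/ 2 by rewrite hidx_node.
have np : is_node p by rewrite /is_node hp; have : 0 < hidx a := na; lia.
have pa : anc p a by rewrite /anc copy_node eqxx hp heap_anc_parent // -hp.
apply: connect_trans (_ : connect _ _ (enc p)) _.
  apply: IH => //; first by rewrite hp; have := leq_div (hidx a) 2; lia.
  by move=> b hb; apply: hK; apply: anc_trans pa.
apply: connect_edge => //; last by apply: hK.
by apply: edge_child => //; rewrite hp.
Qed.

Lemma connect_escape_snk (K : {set V}) w a : tH \notin K -> is_node a ->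
  (forall y, escape w a y -> enc y \notin K) -> connect (DR K) (enc a) tH.
Proof.
move=> tK na; rewrite /escape; case: (eqVneq a w) => [e | naw] /= avoid.
  by rewrite -e in avoid; exact: connect_leftpath_snk.
case: (boolP (anc a w)) avoid => aw avoid; last exact: connect_leftpath_snk.
have [nc cc hc _] := off_childP aw naw.
apply: connect_trans (_ : connect _ _ (enc (off_child w a))) _.
  apply: connect_edge; first exact: edge_child.
    by apply: avoid; rewrite eqxx.
  by apply: avoid; rewrite leftpath_refl ?orbT.
by apply: connect_leftpath_snk => // y Ly; apply: avoid; rewrite Ly orbT.
Qed.

Definition sep_of v := [set u | in_sep v (dec u)].

Lemma below_sep_connect v u : is_node v ->
  connect (DR (sep_of v)) tH u -> below_sep v (dec u).
Proof.
move=> nv; pose A := [pred z | below_sep v (dec z)].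
have clA : closed (DR (sep_of v)) A.
  apply: intro_closed; first exact: connect_DR_sym.
  by move=> a b /and3P [eab _]; rewrite !inE; apply: below_sep_closed.
by move/(closed_connect clA); rewrite !inE => <-; rewrite /tH encK /below_sep eqxx.
Qed.

Lemma sep_of_sep v : is_node v -> is_sep eH [set sH] [set tH] (sep_of v).
Proof.
move=> nv; rewrite is_sep1E !inE /sH /tH !encK /in_sep /is_node /=.
rewrite connect_DR_sym; apply/negP => /(below_sep_connect nv); rewrite encK /below_sep /=.
by case/existsP=> k /and3P [_ /anc_nodeR].
Qed.

Lemma sep_of_unreachable v a : is_node v -> in_sep v a ->
  ~~ connect (DR (sep_of v)) tH (enc a).
Proof.
move=> nv Ka; apply/negP => /(below_sep_connect nv); rewrite encK /below_sep.
case/orP=> [/eqP ea|/existsP [k /and3P [Kk ka kna]]].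
  by have := in_sep_node Ka; rewrite ea.
by move: kna; rewrite (in_sep_antichain Kk Ka ka) eqxx.
Qed.

Lemma sep_of_minimal v (K' : {set V}) :
  K' \proper sep_of v -> ~~ is_sep eH [set sH] [set tH] K'.
Proof.
move=> /properP [sub [u uK uK']].
have nK z : ~~ in_sep v (dec z) -> z \notin K'.
  by apply: contra => zK; move: (subsetP sub z zK); rewrite inE.
have sK : sH \notin K' by apply: nK; rewrite /sH encK.
have tK : tH \notin K' by apply: nK; rewrite /tH encK.
rewrite is_sep1E sK tK /= negbK.
move: uK uK'; rewrite inE -{2}(decK u); set a := dec u => Ka aK'.
have avoid b : anc b a \/ anc a b -> enc b \notin K'.
  move=> ab; case: (eqVneq b a) => [-> // | ne].
  apply: nK; rewrite encK; apply: contra ne => Kb.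
  by case: ab => ab; [rewrite (in_sep_antichain Kb Ka ab)
                    | rewrite (in_sep_antichain Ka Kb ab)].
apply: connect_trans (_ : connect _ _ (enc a)) _.
  by apply: connect_src_anc (in_sep_node Ka) _ => // b ab; apply: avoid; left.
apply: connect_leftpath_snk (in_sep_node Ka) _ => // y Ly.
by apply: avoid; right; exact: leftpath_anc.
Qed.

Lemma sep_of_important_card v (K' : {set V}) : is_node v ->
  is_sep eH [set sH] [set tH] K' -> sep_prec eH [set tH] (sep_of v) K' ->
  #|sep_of v| < #|K'|.
Proof.
move=> nv; rewrite is_sep1E => /and3P [sK' tK' _].
have tK : tH \notin sep_of v by rewrite inE /tH encK.
case/properP => sub [w]; rewrite !in_NR1 // negbK => wK' wnK.
have := below_sep_connect nv wnK; rewrite /below_sep.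
case/orP=> [/eqP wt | /existsP [u0 /and3P [K0 a0 ne0]]].
  by move: wK'; rewrite -(decK w) wt connect0.
have nKw : ~~ in_sep v (dec w).
  by apply: contra ne0 => Kw; rewrite (in_sep_antichain K0 Kw a0).
have KNR a : in_sep v a -> ~~ connect (DR K') tH (enc a).
  move=> Ka; have := sep_of_unreachable nv Ka; rewrite -in_NR1 // => h.
  by have := subsetP sub _ h; rewrite in_NR1.
(* The escape paths from [w] and from the vertices of S_v are disjoint and
   all meet K'. *)
pose P u := [set y | escape (dec w) (dec u) (dec y)].
suff : #|w |: sep_of v| <= #|K'| by rewrite cardsU1 inE nKw.
apply: (card_le_hitting (P := P)).
  move=> i j; rewrite !inE -!(inj_eq (can_inj decK)) => Ii Ij ij.
  apply/pred0P => y /=; rewrite !inE; apply/negbTE/negP => /andP [Pi Pj].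
  exact: (escape_disjoint K0 a0 Ii Ij ij Pi Pj).
move=> i Ii; apply/exists_inP; apply: contraT.
rewrite negb_exists_in => /forall_inP avoid.
have {}avoid y : escape (dec w) (dec i) y -> enc y \notin K'.
  by move=> Py; apply/negP => /avoid; rewrite inE encK Py.
move: Ii avoid; rewrite !inE => /orP [/eqP -> | Ki] avoid.
  have := connect_escape_snk tK' (anc_nodeR a0) avoid.
  by rewrite decK connect_DR_sym (negbTE wK').
have := connect_escape_snk tK' (in_sep_node Ki) avoid.
by rewrite connect_DR_sym (negbTE (KNR _ Ki)).
Qed.

Lemma card_sep_of_le v : is_node v ->
  #|sep_of v| <= r'.+1 + #|[set k : 'I_x | 2 <= hidx v %/ 2 ^ k]|.
Proof.
move=> nv.
set S := [set k : 'I_x | 2 <= hidx v %/ 2 ^ k].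
pose A := [set enc (node c 1) | c in [set~ copy v]].
pose B := [set enc (node (copy v) (heap_sibling (hidx v %/ 2 ^ k))) | k : 'I_x in S].
have sub : sep_of v \subset A :|: [set enc v] :|: B.
  apply/subsetP => u; rewrite inE => Ka.
  have ua : u = enc (dec u) by rewrite decK.
  set a := dec u in Ka ua; case/andP: Ka => na Ka.
  rewrite ua {1}(node_eta na) !inE; move: Ka; case: eqP => [ca | /eqP ca].
    case/orP=> [/eqP ha | /heap_hangs_offE [k k2 hs]].
      by rewrite ca ha -(node_eta nv) eqxx orbT.
    have kx : k < x := heap_depth_lt (hidx_lt v) k2.
    by apply/orP; right; apply/imsetP; exists (Ordinal kx); rewrite ?inE // ca hs.
  move=> /eqP ha; apply/orP; left; apply/orP; left.
  by apply/imsetP; exists (copy a); rewrite ?inE // ha.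
apply: leq_trans (subset_leq_card sub) _.
apply: leq_trans (leq_card_setU _ _).1 _.
apply: leq_add; last exact: leq_imset_card.
apply: leq_trans (leq_card_setU _ _).1 _.
rewrite cards1 addn1 ltnS.
apply: leq_trans (leq_imset_card _ _) _.
by rewrite cardsC1 card_ord.
Qed.

Lemma sep_card_ge (K : {set V}) : is_sep eH [set sH] [set tH] K -> r'.+1 <= #|K|.
Proof.
rewrite is_sep1E => /and3P [sK tK nc].
have hit c : exists2 y, y \in K & copy (dec y) = c.
  have [/exists_inP [y yK /and3P [/eqP cy _ _]] | /exists_inPn avoid] :=
    boolP [exists y in K, leftpath (node c 1) (dec y)]; first by exists y; rewrite ?cy.
  have {}avoid z : leftpath (node c 1) z -> enc z \notin K.
    by move=> Lz; apply/negP => /avoid; rewrite encK Lz.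
  have nr : is_node (node c 1) by apply: node_is_node; rewrite ?M_gt1.
  case/negP: nc; apply: connect_trans (_ : connect _ sH (enc (node c 1))) _.
    by apply: connect_edge => //; [exact: edge_root | exact: avoid (leftpath_refl nr)].
  exact: connect_leftpath_snk.
have : [set: 'I_r'.+1] \subset [set copy (dec y) | y in K].
  by apply/subsetP => c _; have [y yK <-] := hit c; apply/imsetP; exists y.
move/subset_leq_card; rewrite cardsT card_ord => h.
exact: leq_trans h (leq_imset_card _ _).
Qed.

Lemma sep_of_important v : is_node v -> important_sep eH [set sH] [set tH] (sep_of v).
Proof.
move=> nv; rewrite /important_sep /minimal_sep sep_of_sep //=; apply/andP; split.
  by apply/forallP => K'; apply/implyP; apply: sep_of_minimal.
apply/forallP => K'; apply/negP => /and3P [sep prec le].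
by have := sep_of_important_card nv sep prec; rewrite ltnNge le.
Qed.

Definition root0 := node ord0 1.
Lemma root0_node : is_node root0.
Proof. by apply: node_is_node => //; exact: M_gt1. Qed.

Lemma card_sep_of_root0 : #|sep_of root0| = r'.+1.
Proof.
apply/eqP; rewrite eqn_leq sep_card_ge ?sep_of_sep ?root0_node // andbT.
apply: leq_trans (card_sep_of_le root0_node) _.
rewrite -[X in _ <= X]addn0 leq_add2l leqn0 cards_eq0; apply/eqP/setP => k.
rewrite !inE /root0 hidx_node; last exact: M_gt1.
by have := leq_div 1 (2 ^ k); lia.
Qed.

Lemma sep_of_excess v : is_node v ->
  important_excess_le eH [set sH] [set tH] x (sep_of v).
Proof.
move=> nv; rewrite /important_excess_le sep_of_important //=.
apply/existsP; exists (sep_of root0).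
rewrite sep_of_important ?root0_node //=; apply/andP; split.
  apply/forallP => S'; apply/implyP => /andP [/andP [sep _] _].
  by rewrite card_sep_of_root0; apply: sep_card_ge.
rewrite card_sep_of_root0; apply: leq_trans (card_sep_of_le nv) _.
rewrite leq_add2l; apply: leq_trans (subset_leq_card (subsetT _)) _.
by rewrite cardsT card_ord.
Qed.

Lemma edge_nonnode a b : ~~ is_node a -> a != src -> a != snk -> edge a b = false.
Proof.
case: a => [[[c h]|]|] //=; rewrite /is_node /= -eqn0Ngt => /eqP idx0 _ _.
case: b => [[[c' h']|]|]; rewrite /edge /= ?idx0 ?andbF //=.
  by rewrite div0n; apply/negbTE/negP => /andP [/andP [_ p] /eqP q]; move: p; rewrite -q.
by rewrite orbF leqn0 expn_eq0.
Qed.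

Definition nodesH := [set u | is_node (dec u)].

Lemma union_important_excess_nodes :
  union_important_excess_le eH [set sH] [set tH] x = nodesH.
Proof.
apply/setP => u; rewrite inE; apply/bigcupP/idP => [[S /andP [/andP [minS _] _] uS] | nu].
  have /andP [+ _] := minS; rewrite is_sep1E => /and3P [sS tS _].
  have [z ez] := minimal_sep_edge eH_sym minS uS.
  apply: contraTT ez => nu; rewrite /eH edge_nonnode //.
    by apply: contraNneq sS => e; rewrite /sH -e decK.
  by apply: contraNneq tS => e; rewrite /tH -e decK.
exists (sep_of (dec u)); first exact: sep_of_excess.
by rewrite inE in_sep_refl.
Qed.

Lemma card_nodesH : #|nodesH| = r'.+1 * (2 ^ x.+1).-1.
Proof.
have -> : nodesH = enc @: [set a : vtx | is_node a].
  apply/setP => u; rewrite inE; apply/idP/imsetP => [nu|[a]].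
    by exists (dec u); rewrite ?inE // decK.
  by rewrite inE => na ->; rewrite encK.
rewrite card_imset; last exact: can_inj encK.
have -> : [set a : vtx | is_node a] =
  [set Some (Some p) | p in setX [set: 'I_r'.+1] [set~ idx0]].
  apply/setP => -[[[c h]|]|]; rewrite inE /is_node /=.
  - rewrite mem_imset; last by move=> p q [].
    by rewrite !inE lt0n; congr negb; apply/eqP/eqP => [/val_inj | ->].
  - by apply/esym/imsetP => -[].
  - by apply/esym/imsetP => -[].
rewrite card_imset; last by move=> p q [].
by rewrite cardsX cardsT cardsC1 !card_ord.
Qed.

End Graph.
End Tree.

Theorem theorem4 (x r : nat) : 1 <= r ->
  exists (n : nat) (e : rel 'I_n) (s t : 'I_n),
    [/\ symmetric e, irreflexive e & s != t] /\
    [/\ (* the smallest s-t separator has size r *)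
        (exists K : {set 'I_n}, is_sep e [set s] [set t] K /\ #|K| = r),
        (forall K : {set 'I_n}, is_sep e [set s] [set t] K -> r <= #|K|) &
        #|union_important_excess_le e [set s] [set t] x| = 2 ^ x.+1 * r - r].
Proof.
case: r => [// | r'] _.
have decK := @enum_valK (vtx x r'); have encK := @enum_rankK (vtx x r').
exists #|{: vtx x r'}|, (eH enum_val), (sH enum_rank), (tH enum_rank).
split; first by split; [exact: eH_sym | exact: eH_irr | exact: sH_neq_tH].
split.
- exists (sep_of enum_val (root0 x r')).
  by split; [exact: sep_of_sep (root0_node x r') | exact: card_sep_of_root0].
- exact: sep_card_ge.
- rewrite (union_important_excess_nodes decK encK) (card_nodesH decK encK).
  by rewrite mulnC -subn1 mulnBl mul1n.
Qed.
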